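(* Let $M=N=2$, let $\lambda_1,\lambda_2>0$ with $\lambda_1+\lambda_2<1$, let $\beta_1>\beta_2>0$, and let $D_1(\gamma)=D_2(\gamma)=1/(1-\gamma)$ for $\gamma\in[0,1)$ (two identical $M/M/1$ queues of unit service rate). Writing $p_1=p_{11}$, $p_2=p_{21}$, $\gamma_1=\lambda_1p_1+\lambda_2p_2$, $\gamma_2=\lambda_1(1-p_1)+\lambda_2(1-p_2)$, the function $U(p_1,p_2)=\beta_1\lambda_1\bigl(p_1D_1(\gamma_1)+(1-p_1)D_2(\gamma_2)\bigr)+\beta_2\lambda_2\bigl(p_2D_1(\gamma_1)+(1-p_2)D_2(\gamma_2)\bigr)$ is not convex on $[0,1]^2$. Consequently, the social cost minimization problem $\min_P U(P)$ over right stochastic matrices is in general not a convex optimization problem.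
   Context: Here $p_{ij}$ is the probability that a class-$i$ customer (Poisson arrivals of rate $\lambda_i$, delay sensitivity $\beta_i$) is routed to queue $j$, and $D_j(\gamma)$ is the mean sojourn time at queue $j$ when its arrival rate is $\gamma$. *)

From Stdlib Require Import Reals.
Open Scope R_scope.

Definition D (g : R) : R := 1 / (1 - g).

Definition U (l1 l2 b1 b2 : R) (p1 p2 : R) : R :=
  let g1 := l1 * p1 + l2 * p2 in
  let g2 := l1 * (1 - p1) + l2 * (1 - p2) in
  b1 * l1 * (p1 * D g1 + (1 - p1) * D g2)
  + b2 * l2 * (p2 * D g1 + (1 - p2) * D g2).

Definition in_unit_square (x y : R) : Prop := 0 <= x <= 1 /\ 0 <= y <= 1.

Definition convex_on_unit_square (f : R -> R -> R) : Prop :=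
  forall x1 y1 x2 y2 t,
    in_unit_square x1 y1 -> in_unit_square x2 y2 -> 0 <= t <= 1 ->
    f (t * x1 + (1 - t) * x2) (t * y1 + (1 - t) * y2)
      <= t * f x1 y1 + (1 - t) * f x2 y2.

(** Around the uniform routing [(1/2, 1/2)], move class 1 towards queue 2
    and class 2 towards queue 1, in proportions that nearly cancel in the load
    of queue 1.  Along this direction the second difference of [U] is
    [2 d / ((1 - m)^2 - d^2) * (C d / (1 - m) + 2 A)], where [d] is the load
    shift, [m] the load of each queue at the centre, [C] the total weighted
    arrival rate and [A] the weighted routing shift.  Since [b1 > b2], [A] is
    negative (the expensive class leaves the queue whose load grows) and
    dominates the term in [d] once [d] is small enough: the second difference
    is negative, which convexity forbids. *)
From Stdlib Require Import Reals Lra Psatz.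
Open Scope R_scope.

Lemma convex_on_unit_square_midpoint (f : R -> R -> R) (x1 y1 x2 y2 : R) :
  convex_on_unit_square f ->
  in_unit_square x1 y1 -> in_unit_square x2 y2 ->
  2 * f ((x1 + x2) / 2) ((y1 + y2) / 2) <= f x1 y1 + f x2 y2.
Proof.
  intros Hf H1 H2.
  assert (Hmid := Hf x1 y1 x2 y2 (1 / 2) H1 H2 ltac:(lra)).
  replace (1 / 2 * x1 + (1 - 1 / 2) * x2) with ((x1 + x2) / 2) in Hmid by field.
  replace (1 / 2 * y1 + (1 - 1 / 2) * y2) with ((y1 + y2) / 2) in Hmid by field.
  lra.
Qed.

Lemma U_second_difference (l1 l2 b1 b2 u v : R) :
  let m := (l1 + l2) / 2 in
  let d := l1 * u + l2 * v in
  let C := b1 * l1 + b2 * l2 in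
  let A := b1 * l1 * u + b2 * l2 * v in
  0 <= d < 1 - m ->
  U l1 l2 b1 b2 (1 / 2 + u) (1 / 2 + v) + U l1 l2 b1 b2 (1 / 2 - u) (1 / 2 - v)
    - 2 * U l1 l2 b1 b2 (1 / 2) (1 / 2)
  = 2 * d / ((1 - m) ^ 2 - d ^ 2) * (C * d / (1 - m) + 2 * A).
Proof.
  intros m d C A Hd.
  unfold U, D, m, d, C, A in *.
  field; repeat split; nra.
Qed.

Lemma U_not_convex_of_descent (l1 l2 b1 b2 u v : R) :
  let m := (l1 + l2) / 2 in
  let d := l1 * u + l2 * v in
  let C := b1 * l1 + b2 * l2 in
  let A := b1 * l1 * u + b2 * l2 * v in
  in_unit_square (1 / 2 + u) (1 / 2 + v) -> in_unit_square (1 / 2 - u) (1 / 2 - v) ->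
  0 < d < 1 - m -> C * d / (1 - m) + 2 * A < 0 ->
  ~ convex_on_unit_square (U l1 l2 b1 b2).
Proof.
  intros m d C A Hplus Hminus Hd Hneg Hconvex.
  assert (Hgap := convex_on_unit_square_midpoint _ _ _ _ _ Hconvex Hplus Hminus).
  replace ((1 / 2 + u + (1 / 2 - u)) / 2) with (1 / 2) in Hgap by field.
  replace ((1 / 2 + v + (1 / 2 - v)) / 2) with (1 / 2) in Hgap by field.
  assert (Hsecond : U l1 l2 b1 b2 (1 / 2 + u) (1 / 2 + v)
                    + U l1 l2 b1 b2 (1 / 2 - u) (1 / 2 - v)
                    - 2 * U l1 l2 b1 b2 (1 / 2) (1 / 2)
                    = 2 * d / ((1 - m) ^ 2 - d ^ 2) * (C * d / (1 - m) + 2 * A))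
    by (refine (U_second_difference l1 l2 b1 b2 u v _); unfold d, m in Hd; lra).
  assert (Hfactor : 0 < 2 * d / ((1 - m) ^ 2 - d ^ 2)) by (apply Rdiv_lt_0_compat; nra).
  nra.
Qed.

Theorem mainTheorem3 (l1 l2 b1 b2 : R)
  (hl1 : 0 < l1) (hl2 : 0 < l2) (hl : l1 + l2 < 1)
  (hb : b1 > b2) (hb2 : b2 > 0) :
  ~ convex_on_unit_square (U l1 l2 b1 b2).
Proof.
  set (e := (b1 - b2) * l2 / (16 * b1)).
  assert (he : 0 < e < l2 / 16).
  { unfold e; split; [apply Rdiv_lt_0_compat; nra|].
    apply Rmult_lt_reg_r with (16 * b1); [lra|]. field_simplify; nra. }
  set (m := (l1 + l2) / 2).
  apply (U_not_convex_of_descent l1 l2 b1 b2 (- l2 / 4 + e) (l1 / 4));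
    cbv zeta; fold m; unfold in_unit_square.
  1-3: unfold m; nra.
  (* [C < 2 b1 (1 - m)] bounds the load term by [2 b1 l1 e], and the choice
     of [e] makes the routing term cancel it with [(b1 - b2) l1 l2 / 4] to spare. *)
  assert (Hload : (b1 * l1 + b2 * l2) * (l1 * e) / (1 - m) < 2 * b1 * (l1 * e)).
  { apply Rmult_lt_reg_r with (1 - m); [unfold m; lra|].
    field_simplify; [|unfold m; lra].
    assert (b1 * l1 + b2 * l2 < 2 * b1 * (1 - m)) by (unfold m; nra).
    assert (0 < l1 * e) by nra.
    nra. }
  assert (Hrouting : 2 * (b1 * l1 * (- l2 / 4 + e) + b2 * l2 * (l1 / 4)) + 2 * b1 * (l1 * e)
                     = - (b1 - b2) * l1 * l2 / 4)
    by (unfold e; field; lra).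
  replace (l1 * (- l2 / 4 + e) + l2 * (l1 / 4)) with (l1 * e) by field.
  assert (0 < (b1 - b2) * l1 * l2) by (apply Rmult_lt_0_compat; nra).
  lra.
Qed.
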